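(* $(\textbf{W}, \nabla_{\sqcup\!\sqcup}, \iota_{\sqcup\!\sqcup}, \Delta_\odot, \epsilon_\odot)$ is a graded bialgebra, but not a Hopf algebra.
   Context: Let $\Bbbk$ be a field. A word is a finite sequence of positive integers; $\ell(w)$ is its length and $\max(w)$ its largest letter ($\max(\emptyset)=0$). Let $\textsf{Shuffle}$ be the $\Bbbk$-vector space with basis all words, with the shuffle product $u\sqcup\!\sqcup v$ (sum over all interleavings of $u$ and $v$, with multiplicity) and deconcatenation coproduct. For a word $w=w_1\cdots w_m$ with $\max(w)\le n\in\mathbb{N}$, let $[w,n]$ be the linear endomorphism of $\textsf{Shuffle}$ sending a word $v$ of length $n$ to $v_{w_1}v_{w_2}\cdots v_{w_m}$ and all other words to $0$. Let $\textbf{W}$ be the span of all such $[w,n]$ (these form a basis), graded by declaring $[w,n]$ to have degree $\ell(w)$. For a word $w$ let $w\uparrow m$ be the word obtained by adding $m$ to each letter. Define $\nabla_{\sqcup\!\sqcup}([v,m]\otimes[w,n]) = [v\sqcup\!\sqcup (w\uparrow m), m+n]$ (extended linearly in the first slot), $\iota_{\sqcup\!\sqcup}(1)=[\emptyset,0]$, $\epsilon_\odot([w,n])=1$ if $w=\emptyset$ and $0$ otherwise, and $\Delta_\odot([w,n])=\sum_{i=0}^m [w_1\cdots w_i,n]\otimes[w_{i+1}\cdots w_m,n]$ for $w=w_1\cdots w_m$. *)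

From HB Require Import structures.
From mathcomp Require Import all_boot all_algebra.
From mathcomp Require Import finmap.
From mathcomp Require Import monalg.

Set Implicit Arguments.
Unset Strict Implicit.
Unset Printing Implicit Defensive.

Import GRing.Theory.
Local Open Scope ring_scope.

(* A word is a seq nat all of whose letters are positive.              *)

Fixpoint shuffle (u : seq nat) : seq nat -> seq (seq nat) :=
  match u with
  | [::] => fun v => [:: v]
  | a :: u' =>
      fix sh (v : seq nat) : seq (seq nat) :=
        match v with
        | [::] => [:: u]
        | b :: v' => map (cons a) (shuffle u' v) ++ map (cons b) (sh v')
        end
  end.

Definition shiftw (w : seq nat) (m : nat) : seq nat := map (addn m) w.

Definition maxw (w : seq nat) : nat := foldr maxn 0%N w.

(* The basis of W: pairs [w,n] with w a word and max(w) <= n.          *)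
Definition validWn (p : seq nat * nat) : bool :=
  all (fun a => 0 < a)%N p.1 && (maxw p.1 <= p.2)%N.

Definition Wbasis : choiceType := {p : seq nat * nat | validWn p}.

Definition bword (b : Wbasis) : seq nat := (val b).1.
Definition bnum (b : Wbasis) : nat := (val b).2.
Definition bdeg (b : Wbasis) : nat := size (bword b).

Section WDefs.
Variable k : fieldType.

(* W = free k-vector space on the basis elements [w,n];
   W (x) W and W (x) W (x) W are the free spaces on pairs / triples.   *)
Definition W := (@malg (Wbasis) k).
Definition W2 := (@malg (Wbasis * Wbasis)%type k).
Definition W3 := (@malg (Wbasis * Wbasis * Wbasis)%type k).

Definition linext (A : choiceType) (V : lmodType k) (h : A -> V)
    (g : (@malg (A) k)) : V :=
  \sum_(a <- msupp g) g@_a *: h a.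

Definition tens (A B : choiceType) (f : (@malg (A) k)) (g : (@malg (B) k))
    : (@malg (A * B)%type k) :=
  \sum_(a <- msupp f) \sum_(b <- msupp g) << f@_a * g@_b *g (a, b) >>.

Definition mapT (A B C D : choiceType)
    (f : (@malg (A) k) -> (@malg (C) k)) (g : (@malg (B) k) -> (@malg (D) k))
    : (@malg (A * B)%type k) -> (@malg (C * D)%type k) :=
  linext (fun ab : A * B => tens (f << ab.1 >>) (g << ab.2 >>)).

(* associativity isomorphism (A (x) B) (x) C -> A (x) (B (x) C) is implicit:
   we use the reassociation of basis triples. *)
Definition reassoc (A B C : choiceType)
    : (@malg (A * (B * C))%type k) -> (@malg (A * B * C)%type k) :=
  linext (fun t : A * (B * C) => << (t.1, t.2.1, t.2.2) >>).

(* The basis vector [w,n] (all pairs fed to it below are valid; an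
   invalid pair would give 0). *)
Definition mkB (p : seq nat * nat) : W :=
  if insub p is Some b then << b >> else 0.

Definition mulB (x y : Wbasis) : W :=
  \sum_(s <- shuffle (bword x) (shiftw (bword y) (bnum x)))
     mkB (s, (bnum x + bnum y)%N).

Definition nablaW : W2 -> W := linext (fun xy => mulB xy.1 xy.2).

Definition iotaW (c : k) : W := c *: mkB ([::], 0%N).

Definition epsW (g : W) : k :=
  \sum_(b <- msupp g) g@_b * (if bword b == [::] then 1 else 0).

Definition DeltaB (b : Wbasis) : W2 :=
  \sum_(i < (size (bword b)).+1)
     tens (mkB (take i (bword b), bnum b)) (mkB (drop i (bword b), bnum b)).

Definition DeltaW : W -> W2 := linext DeltaB.

Definition mul2 (X Y : W2) : W2 :=
  \sum_(p <- msupp X) \sum_(q <- msupp Y)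
     (X@_p * Y@_q) *: tens (mulB p.1 q.1) (mulB p.2 q.2).

(* identification  k (x) W = W = W (x) k  used for the counit axioms *)
Definition epsL : W2 -> W := linext (fun ab => epsW << ab.1 >> *: << ab.2 >>).
Definition epsR : W2 -> W := linext (fun ab => epsW << ab.2 >> *: << ab.1 >>).

Definition homog (d : nat) (x : W) : Prop :=
  forall b, b \in msupp x -> bdeg b = d.
Definition homog2 (d : nat) (X : W2) : Prop :=
  forall p, p \in msupp X -> (bdeg p.1 + bdeg p.2)%N = d.

Definition structure_maps_linear : Prop :=
  (forall (c : k) (X Y : W2), nablaW (c *: X + Y) = c *: nablaW X + nablaW Y) /\
  (forall (c : k) (x y : W), DeltaW (c *: x + y) = c *: DeltaW x + DeltaW y) /\
  (forall (c : k) (x y : W), epsW (c *: x + y) = c * epsW x + epsW y).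

Definition is_algebra : Prop :=
  (forall T : W3,
      nablaW (mapT nablaW id T)
      = nablaW (mapT id nablaW (linext (fun t : Wbasis * Wbasis * Wbasis =>
               << (t.1.1, (t.1.2, t.2)) >>) T))) /\
  (forall x : W, nablaW (tens (iotaW 1) x) = x /\ nablaW (tens x (iotaW 1)) = x).

Definition is_coalgebra : Prop :=
  (forall x : W,
      mapT DeltaW id (DeltaW x) = reassoc (mapT id DeltaW (DeltaW x))) /\
  (forall x : W, epsL (DeltaW x) = x /\ epsR (DeltaW x) = x).

Definition bialgebra_compat : Prop :=
  (forall x y : W, DeltaW (nablaW (tens x y)) = mul2 (DeltaW x) (DeltaW y)) /\
  DeltaW (iotaW 1) = tens (iotaW 1) (iotaW 1) /\
  (forall x y : W, epsW (nablaW (tens x y)) = epsW x * epsW y) /\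
  epsW (iotaW 1) = 1.

Definition graded_maps : Prop :=
  (forall i j (x y : W), homog i x -> homog j y ->
          homog (i + j) (nablaW (tens x y))) /\
  homog 0 (iotaW 1) /\
  (forall d (x : W), homog d x -> homog2 d (DeltaW x)) /\
  (forall d (x : W), (0 < d)%N -> homog d x -> epsW x = 0).

Definition is_graded_bialgebra : Prop :=
  structure_maps_linear /\ is_algebra /\ is_coalgebra /\
  bialgebra_compat /\ graded_maps.

Definition conv (f g : W -> W) (x : W) : W := nablaW (mapT f g (DeltaW x)).

Definition is_hopf : Prop :=
  exists S : {linear W -> W},
    forall x : W, conv S id x = iotaW (epsW x) /\ conv id S x = iotaW (epsW x).

End WDefs.

(* All structure maps are linear, so every axiom only has to be
   checked on basis elements [w,n], where it becomes a statement about words: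
   associativity of the shifted shuffle product reduces to associativity of
   the shuffle (shifting commutes with shuffling), coassociativity and the
   counit laws are those of deconcatenation, and the compatibility of the
   product with the coproduct is the classical fact that deconcatenation is a
   morphism for the shuffle product, D(u sh v) = D(u) sh D(v).  Product and
   coproduct add up word lengths, which gives the grading.
   W is not Hopf: g = [empty,1] is grouplike (D g = g (x) g, eps g = 1), so an
   antipode S would satisfy S(g) g = [empty,0]; but every basis element
   occurring in a product x [empty,1] has second index n >= 1. *)

From HB Require Import structures.
From Pilot Require Import Defs.
From mathcomp Require Import all_boot all_algebra.
From mathcomp Require Import finmap monalg.
From mathcomp Require Import zify.

Set Implicit Arguments.
Unset Strict Implicit.
Unset Printing Implicit Defensive.

Import GRing.Theory.
Local Open Scope ring_scope.

Section Shuffle.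
Variable V : zmodType.
Implicit Types (a b c : nat) (u v w s : seq nat) (F : seq nat -> V).

Lemma shuffle_cons a u b v : shuffle (a :: u) (b :: v) =
  map (cons a) (shuffle u (b :: v)) ++ map (cons b) (shuffle (a :: u) v).
Proof. by []. Qed.

Lemma shuffle0s v : shuffle [::] v = [:: v]. Proof. by []. Qed.

Lemma shuffles0 u : shuffle u [::] = [:: u]. Proof. by case: u. Qed.

Lemma big_shuffle_cons F a u b v :
  \sum_(t <- shuffle (a :: u) (b :: v)) F t =
  \sum_(t <- shuffle u (b :: v)) F (a :: t) + \sum_(t <- shuffle (a :: u) v) F (b :: t).
Proof. by rewrite shuffle_cons big_cat !big_map. Qed.

Lemma shuffle_map (f : nat -> nat) u v :
  shuffle (map f u) (map f v) = map (map f) (shuffle u v).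
Proof.
elim: u v => [|a u IHu] v //; elim: v => [|b v IHv]; first by rewrite !shuffles0.
rewrite [map f (a :: u)]/= [map f (b :: v)]/= shuffle_cons.
by rewrite -[f b :: _]/(map f (b :: v)) IHu -[f a :: _]/(map f (a :: u)) IHv
  [shuffle (a :: u) (b :: v)]shuffle_cons map_cat -!map_comp.
Qed.

Lemma perm_shuffle u v s : s \in shuffle u v -> perm_eq s (u ++ v).
Proof.
elim: u v s => [|a u IHu] v s; first by rewrite shuffle0s inE => /eqP ->.
elim: v s => [|b v IHv] s; first by rewrite shuffles0 inE cats0 => /eqP ->.
rewrite shuffle_cons mem_cat => /orP[] /mapP[s' Hs' ->].
  by rewrite /= perm_cons; apply: IHu.
rewrite -[b :: v]cat1s perm_sym perm_catCA /= perm_cons perm_sym; exact: IHv.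
Qed.

Lemma big_shuffle_assocl_cons F a u b v c w :
  \sum_(s <- shuffle (a :: u) (b :: v)) \sum_(t <- shuffle s (c :: w)) F t =
    \sum_(s <- shuffle u (b :: v)) \sum_(t <- shuffle s (c :: w)) F (a :: t)
  + \sum_(s <- shuffle (a :: u) v) \sum_(t <- shuffle s (c :: w)) F (b :: t)
  + \sum_(s <- shuffle (a :: u) (b :: v)) \sum_(t <- shuffle s w) F (c :: t).
Proof.
rewrite (big_shuffle_cons (fun s => \sum_(t <- shuffle s w) F (c :: t))).
rewrite big_shuffle_cons.
under eq_bigr do rewrite big_shuffle_cons.
under [X in _ + X = _]eq_bigr do rewrite big_shuffle_cons.
by rewrite !big_split /= addrACA addrA.
Qed.

Lemma big_shuffle_assocr_cons F a u b v c w :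
  \sum_(s <- shuffle (b :: v) (c :: w)) \sum_(t <- shuffle (a :: u) s) F t =
    \sum_(s <- shuffle (b :: v) (c :: w)) \sum_(t <- shuffle u s) F (a :: t)
  + \sum_(s <- shuffle v (c :: w)) \sum_(t <- shuffle (a :: u) s) F (b :: t)
  + \sum_(s <- shuffle (b :: v) w) \sum_(t <- shuffle (a :: u) s) F (c :: t).
Proof.
rewrite (big_shuffle_cons (fun s => \sum_(t <- shuffle u s) F (a :: t))).
rewrite big_shuffle_cons.
under eq_bigr do rewrite big_shuffle_cons.
under [X in _ + X = _]eq_bigr do rewrite big_shuffle_cons.
by rewrite !big_split /= addrACA addrA.
Qed.

Lemma big_shuffle_assoc F u v w :
  \sum_(s <- shuffle u v) \sum_(t <- shuffle s w) F t =
  \sum_(s <- shuffle v w) \sum_(t <- shuffle u s) F t.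
Proof.
move: {2}(size u + size v + size w)%N (leqnn (size u + size v + size w)) => n.
elim: n u v w F => [|n IH] [|a u] [|b v] [|c w] F //= Hn;
  rewrite ?shuffle0s ?shuffles0 ?big_seq1 //;
  try by apply: eq_bigr => s _; rewrite ?shuffle0s ?shuffles0 big_seq1.
rewrite big_shuffle_assocl_cons big_shuffle_assocr_cons !IH //=; lia.
Qed.

End Shuffle.

Section Splits.
Variable V : zmodType.
Implicit Types (a b x : nat) (u v w s : seq nat) (G : seq nat -> seq nat -> V).

Definition sum_splits s G : V := \sum_(i < (size s).+1) G (take i s) (drop i s).

Lemma sum_splits_nil G : sum_splits [::] G = G [::] [::].
Proof. by rewrite /sum_splits big_ord_recl big_ord0 addr0. Qed.

Lemma sum_splits_cons x s G :
  sum_splits (x :: s) G = G [::] (x :: s) + sum_splits s (fun p q => G (x :: p) q).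
Proof. by rewrite /sum_splits big_ord_recl. Qed.

Lemma eq_sum_splits s G1 G2 : G1 =2 G2 -> sum_splits s G1 = sum_splits s G2.
Proof. by move=> E; apply: eq_bigr => i _; rewrite E. Qed.

Lemma eq_sum_splits_in s G1 G2 :
  (forall i, (i <= size s)%N -> G1 (take i s) (drop i s) = G2 (take i s) (drop i s)) ->
  sum_splits s G1 = sum_splits s G2.
Proof. by move=> E; apply: eq_bigr => i _; apply: E; rewrite -ltnS. Qed.

Lemma sum_splitsD s G1 G2 :
  sum_splits s (fun p q => G1 p q + G2 p q) = sum_splits s G1 + sum_splits s G2.
Proof. by rewrite /sum_splits big_split. Qed.

Lemma sum_splits_map f s G :
  sum_splits (map f s) G = sum_splits s (fun p q => G (map f p) (map f q)).
Proof.
by rewrite /sum_splits size_map; apply: eq_bigr => i _; rewrite map_take map_drop.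
Qed.

Lemma sum_splits_assoc (H : seq nat -> seq nat -> seq nat -> V) w :
  sum_splits w (fun p r => sum_splits p (fun p1 p2 => H p1 p2 r)) =
  sum_splits w (fun p1 p => sum_splits p (fun p2 p3 => H p1 p2 p3)).
Proof.
elim: w H => [|x w IH] H; first by rewrite !sum_splits_nil.
rewrite !sum_splits_cons !sum_splits_nil.
under eq_sum_splits do rewrite sum_splits_cons.
by rewrite sum_splitsD (IH (fun p => H (x :: p))) addrA.
Qed.

Lemma sum_splits_nill (F : seq nat -> V) w :
  sum_splits w (fun p q => if p is [::] then F q else 0) = F w.
Proof.
case: w => [|x w]; first by rewrite sum_splits_nil.
by rewrite sum_splits_cons /sum_splits big1 ?addr0.
Qed.

Lemma sum_splits_nilr (F : seq nat -> V) w :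
  sum_splits w (fun p q => if q is [::] then F p else 0) = F w.
Proof.
elim: w F => [|x w IH] F; first by rewrite sum_splits_nil.
by rewrite sum_splits_cons add0r (IH (fun p => F (x :: p))).
Qed.

Definition sum_split_shuffles u v G : V :=
  sum_splits u (fun u1 u2 => sum_splits v (fun v1 v2 =>
    \sum_(s1 <- shuffle u1 v1) \sum_(s2 <- shuffle u2 v2) G s1 s2)).

Lemma sum_split_shuffles_cons a u b v G :
  sum_split_shuffles (a :: u) (b :: v) G =
    \sum_(s <- shuffle (a :: u) (b :: v)) G [::] s
  + sum_split_shuffles u (b :: v) (fun s1 => G (a :: s1))
  + sum_split_shuffles (a :: u) v (fun s1 => G (b :: s1)).
Proof.
rewrite /sum_split_shuffles !sum_splits_cons shuffle0s big_seq1 -!addrA; congr (_ + _).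
rewrite addrCA; congr (_ + _).
  by apply: eq_sum_splits => p q; rewrite !shuffle0s !big_seq1.
rewrite -sum_splitsD; apply: eq_sum_splits => p q.
rewrite !sum_splits_cons !shuffles0 !big_seq1 -addrA -sum_splitsD; congr (_ + _).
by apply: eq_sum_splits => v1 v2; rewrite big_shuffle_cons.
Qed.

(* Deconcatenation is a morphism for the shuffle product. *)
Lemma big_shuffle_splits G u v :
  \sum_(s <- shuffle u v) sum_splits s G = sum_split_shuffles u v G.
Proof.
move: {2}(size u + size v)%N (leqnn (size u + size v)) => n.
elim: n u v G => [|n IH] [|a u] [|b v] G Hn //; last first.
  rewrite sum_split_shuffles_cons big_shuffle_cons.
  under eq_bigr do rewrite sum_splits_cons.
  under [X in _ + X = _]eq_bigr do rewrite sum_splits_cons.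
  rewrite !big_split /= -/(shuffle (a :: u) v) !IH; try by move: Hn => /=; lia.
  by rewrite (big_shuffle_cons (G [::])) addrACA addrA.
all: rewrite /sum_split_shuffles ?(sum_splits_nil, shuffle0s, shuffles0, big_seq1) //.
all: by apply: eq_sum_splits => p q; rewrite ?(sum_splits_nil, shuffle0s, shuffles0, big_seq1).
Qed.

End Splits.

Section LinearFun.
Variables (R : pzRingType) (U V : lmodType R) (f : U -> V).
Hypothesis f_linear : linear f.

Let fL : {linear U -> V} := HB.pack f (GRing.isLinear.Build R U V *:%R f f_linear).

Lemma linear_funD x y : f (x + y) = f x + f y. Proof. exact: (linearD fL). Qed.

Lemma linear_funZ c x : f (c *: x) = c *: f x. Proof. exact: (linearZ_LR fL). Qed.

Lemma linear_fun_sum I r (P : pred I) (F : I -> U) :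
  f (\sum_(i <- r | P i) F i) = \sum_(i <- r | P i) f (F i).
Proof. exact: (linear_sum fL). Qed.

End LinearFun.

Lemma linear_comp (R : pzRingType) (U V X : lmodType R) (f : V -> X) (g : U -> V) :
  linear f -> linear g -> linear (fun x => f (g x)).
Proof. by move=> lf lg c x y; rewrite lg lf. Qed.

Lemma linear_idfun (R : pzRingType) (U : lmodType R) : linear (fun x : U => x).
Proof. by []. Qed.

Section FreeModule.
Variable k : fieldType.

Lemma monalgUZ (A : choiceType) (c : k) (a : A) : << c *g a >> = c *: << a >>.
Proof. by apply/malgP => b; rewrite mcoeffZ !mcoeffU mulr_natr. Qed.

Section Linext.
Variables (A : choiceType) (V : lmodType k).
Implicit Types (f g : {malg k[A]} -> V) (h : A -> V).

Lemma linextEw h x (D : {fset A}) : (msupp x `<=` D)%fset ->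
  linext h x = \sum_(a <- D) x@_a *: h a.
Proof.
move=> le; rewrite /linext [LHS](big_fset_incl _ le) => //= a aD /mcoeff_outdom ->.
by rewrite scale0r.
Qed.

Lemma linext_is_linear h : linear (linext h).
Proof.
move=> c x y.
have Hx : (msupp x `<=` msupp x `|` msupp y)%fset by apply: fsubsetUl.
have Hy : (msupp y `<=` msupp x `|` msupp y)%fset by apply: fsubsetUr.
have Hxy : (msupp (c *: x + y) `<=` msupp x `|` msupp y)%fset.
  by apply: fsubset_trans (msuppD_le _ _) _; apply: fsetSU; exact: msuppZ_le.
rewrite (linextEw _ Hx) (linextEw _ Hy) (linextEw _ Hxy) scaler_sumr -big_split.
by apply: eq_bigr => a _; rewrite mcoeffD mcoeffZ scalerDl scalerA.
Qed.

Lemma linextU h c a : linext h << c *g a >> = c *: h a.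
Proof. by rewrite (linextEw _ msuppU_le) big_seq_fset1 mcoeffUU. Qed.

Lemma linextU1 h a : linext h << a >> = h a.
Proof. by rewrite linextU scale1r. Qed.

Lemma linear_linextE f : linear f -> f =1 linext (fun a => f << a >>).
Proof.
move=> lf x; rewrite {1}(monalgE x) linear_fun_sum //.
by apply: eq_bigr => a _; rewrite monalgUZ linear_funZ.
Qed.

Lemma linear_eqU f g : linear f -> linear g -> (forall a, f << a >> = g << a >>) ->
  f =1 g.
Proof.
move=> lf lg E x; rewrite (linear_linextE lf) (linear_linextE lg).
by apply: eq_bigr => a _; rewrite E.
Qed.

Lemma linear_linext_fun (B : choiceType) (x : {malg k[A]}) (F : A -> {malg k[B]} -> V) :
  (forall a, linear (F a)) -> linear (fun y => linext (fun a => F a y) x).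
Proof.
move=> lF c y z; rewrite scaler_sumr -big_split; apply: eq_bigr => a _.
by rewrite lF scalerDr !scalerA mulrC.
Qed.

End Linext.

Lemma bilinear_eqU (A B : choiceType) (V : lmodType k)
    (F G : {malg k[A]} -> {malg k[B]} -> V) :
  (forall y, linear (F^~ y)) -> (forall x, linear (F x)) ->
  (forall y, linear (G^~ y)) -> (forall x, linear (G x)) ->
  (forall a b, F << a >> << b >> = G << a >> << b >>) ->
  forall x y, F x y = G x y.
Proof.
move=> lF1 lF2 lG1 lG2 E x y.
by apply: (linear_eqU (lF1 y) (lG1 y)) => a; apply: (linear_eqU (lF2 _) (lG2 _)).
Qed.

Lemma linear_sum_splits (A B : choiceType) (f : {malg k[A]} -> {malg k[B]}) w G :
  linear f -> f (sum_splits w G) = sum_splits w (fun p q => f (G p q)).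
Proof. by move=> lf; rewrite /sum_splits linear_fun_sum. Qed.

Section Tensor.
Variables (A B : choiceType).

Lemma tensE (x : {malg k[A]}) (y : {malg k[B]}) :
  tens x y = linext (fun a => linext (fun b => << (a, b) >>) y) x.
Proof.
apply: eq_bigr => a _; rewrite /linext scaler_sumr; apply: eq_bigr => b _.
by rewrite monalgUZ scalerA.
Qed.

Lemma tens_linearl (y : {malg k[B]}) : linear (fun x : {malg k[A]} => tens x y).
Proof. by move=> c x z; rewrite !tensE linext_is_linear. Qed.

Lemma tens_linearr (x : {malg k[A]}) : linear (fun y : {malg k[B]} => tens x y).
Proof.
move=> c y z; rewrite !tensE.
exact: (@linear_linext_fun _ _ _ x (fun a => linext (fun b => << (a, b) >>))
  (fun a => linext_is_linear _) c y z).
Qed.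

Lemma tensUU (a : A) (b : B) :
  tens (<< a >> : {malg k[A]}) (<< b >> : {malg k[B]}) = << (a, b) >>.
Proof. by rewrite tensE !linextU1. Qed.

Lemma tens_suml (I : Type) (r : seq I) (F : I -> {malg k[A]}) (y : {malg k[B]}) :
  tens (\sum_(i <- r) F i) y = \sum_(i <- r) tens (F i) y.
Proof. exact: (linear_fun_sum (tens_linearl y)). Qed.

Lemma tens_sumr (I : Type) (r : seq I) (F : I -> {malg k[B]}) (x : {malg k[A]}) :
  tens x (\sum_(i <- r) F i) = \sum_(i <- r) tens x (F i).
Proof. exact: (linear_fun_sum (tens_linearr x)). Qed.

Lemma tens_sum_splitsl w (G : seq nat -> seq nat -> {malg k[A]})
    (y : {malg k[B]}) :
  tens (sum_splits w G) y = sum_splits w (fun p q => tens (G p q) y).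
Proof. exact: (linear_sum_splits _ _ (tens_linearl y)). Qed.

Lemma tens_sum_splitsr w (G : seq nat -> seq nat -> {malg k[B]})
    (x : {malg k[A]}) :
  tens x (sum_splits w G) = sum_splits w (fun p q => tens x (G p q)).
Proof. exact: (linear_sum_splits _ _ (tens_linearr x)). Qed.

End Tensor.

Lemma mapT_tens (A B C D : choiceType) (f : {malg k[A]} -> {malg k[C]})
    (g : {malg k[B]} -> {malg k[D]}) x y :
  linear f -> linear g -> mapT f g (tens x y) = tens (f x) (g y).
Proof.
move=> lf lg; move: x y; apply: bilinear_eqU => [y|x|y|x|a b].
- exact: linear_comp (linext_is_linear _) (tens_linearl _).
- exact: linear_comp (linext_is_linear _) (tens_linearr _).
- exact: linear_comp (tens_linearl _) lf.
- exact: linear_comp (tens_linearr _) lg.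
- by rewrite tensUU /mapT linextU1.
Qed.

Lemma reassoc_tens (A B C : choiceType) (x : {malg k[A]}) (y : {malg k[B]})
    (z : {malg k[C]}) :
  reassoc (tens x (tens y z)) = tens (tens x y) z.
Proof.
move: x y; apply: bilinear_eqU => [y|x|y|x|a b].
- exact: linear_comp (linext_is_linear _) (tens_linearl _).
- exact: linear_comp (linext_is_linear _) (linear_comp (tens_linearr _) (tens_linearl _)).
- exact: linear_comp (tens_linearl z) (tens_linearl y).
- exact: linear_comp (tens_linearl z) (tens_linearr x).
rewrite tensUU; move: z; apply: linear_eqU => [||c].
- exact: linear_comp (linext_is_linear _) (linear_comp (tens_linearr _) (tens_linearr _)).
- exact: tens_linearr.
- by rewrite !tensUU /reassoc linextU1.
Qed.

Section Support.
Variable A : choiceType.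
Implicit Types (P : A -> Prop) (x y : {malg k[A]}).

Definition msupp_on P x := forall a, a \in msupp x -> P a.

Lemma msupp_on0 P : msupp_on P 0.
Proof. by move=> a; rewrite msupp0 inE. Qed.

Lemma msupp_onD P x y : msupp_on P x -> msupp_on P y -> msupp_on P (x + y).
Proof.
by move=> Px Py a /(fsubsetP (msuppD_le x y)); rewrite inE => /orP[/Px|/Py].
Qed.

Lemma msupp_onZ P c x : msupp_on P x -> msupp_on P (c *: x).
Proof. by move=> Px a /(fsubsetP (msuppZ_le c x)) /Px. Qed.

Lemma msupp_onU P c a : P a -> msupp_on P << c *g a >>.
Proof. by move=> Pa b /(fsubsetP msuppU_le); rewrite inE => /eqP ->. Qed.

Lemma msupp_on_sum P (I : eqType) (r : seq I) (F : I -> {malg k[A]}) :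
  (forall i, i \in r -> msupp_on P (F i)) -> msupp_on P (\sum_(i <- r) F i).
Proof.
move=> PF; rewrite big_seq; apply: (big_ind (msupp_on P)) => //.
- exact: msupp_on0.
- exact: msupp_onD.
Qed.

Lemma mcoeff_msupp_on P x a : msupp_on P x -> ~ P a -> x@_a = 0.
Proof. by move=> Px nPa; apply: mcoeff_outdom; apply/negP => /Px. Qed.

End Support.

Lemma msupp_on_linext (A B : choiceType) (P : A -> Prop) (h : B -> {malg k[A]})
    (x : {malg k[B]}) :
  (forall b, b \in msupp x -> msupp_on P (h b)) -> msupp_on P (linext h x).
Proof. by move=> hP; apply: msupp_on_sum => b /hP; apply: msupp_onZ. Qed.

Lemma msupp_tens (A B : choiceType) (x : {malg k[A]}) (y : {malg k[B]}) a b :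
  (a, b) \in msupp (tens x y) -> a \in msupp x /\ b \in msupp y.
Proof.
have : msupp_on (fun ab => ab.1 \in msupp x /\ ab.2 \in msupp y) (tens x y).
  by apply: msupp_on_sum => a' Ha'; apply: msupp_on_sum => b' Hb'; apply: msupp_onU.
exact.
Qed.

End FreeModule.

Section Words.
Implicit Types (u v w s : seq nat) (m n : nat).

Lemma maxw_leq w n : (maxw w <= n)%N = all (fun a => a <= n)%N w.
Proof. by elim: w => //= a w IH; rewrite geq_max IH. Qed.

Lemma validWnE w n : validWn (w, n) = all (fun a => 0 < a <= n)%N w.
Proof. by rewrite /validWn maxw_leq -all_predI. Qed.

Lemma validWn_take i w n : validWn (w, n) -> validWn (take i w, n).
Proof. by rewrite !validWnE -{1}(cat_take_drop i w) all_cat => /andP[]. Qed.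

Lemma validWn_drop i w n : validWn (w, n) -> validWn (drop i w, n).
Proof. by rewrite !validWnE -{1}(cat_take_drop i w) all_cat => /andP[]. Qed.

Lemma validWn_shuffle u m v n s : validWn (u, m) -> validWn (v, n) ->
  s \in shuffle u (shiftw v m) -> validWn (s, (m + n)%N).
Proof.
rewrite !validWnE => Hu Hv /perm_shuffle Hs; rewrite (perm_all _ Hs) all_cat.
rewrite /shiftw all_map; apply/andP; split.
  by apply: sub_all Hu => a /andP[? ?]; apply/andP; split; lia.
by apply: sub_all Hv => a /andP[? ?] /=; apply/andP; split; lia.
Qed.

Lemma shiftw_shiftw w m n : shiftw (shiftw w n) m = shiftw w (m + n)%N.
Proof. by rewrite /shiftw -map_comp; apply: eq_map => a /=; rewrite addnA. Qed.

Lemma shiftw0 w : shiftw w 0 = w.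
Proof. exact: map_id. Qed.

End Words.

Section WBialgebra.
Variable k : fieldType.
Local Notation W := (W k).
Local Notation W2 := (W2 k).
Local Notation mkB := (mkB k).
Implicit Types (u v w s : seq nat) (m n : nat) (a b : Wbasis).

Lemma mkB_valid p (Hp : validWn p) : mkB p = << (exist _ p Hp : Wbasis) >>.
Proof. by rewrite /Defs.mkB insubT. Qed.

Lemma mkB_val b : mkB (val b) = << b >>.
Proof. by rewrite /Defs.mkB valK. Qed.

Lemma mcoeff_mkB p b : (mkB p)@_b = (val b == p)%:R.
Proof.
rewrite /Defs.mkB; case: insubP => [b' _ <-|Hp]; first by rewrite mcoeffU val_eqE eq_sym.
by rewrite mcoeff0; case: eqP => // Eb; move: Hp; rewrite -Eb (valP b).
Qed.

Lemma msupp_on_mkB p : msupp_on (fun b => val b = p) (mkB p).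
Proof. by rewrite /Defs.mkB; case: insubP => [b _ <-|_]; [apply: msupp_onU|apply: msupp_on0]. Qed.

(* [u,m] * [v,n] and the coproduct of [w,n], for raw pairs: [mkB] sends an
   invalid pair to 0, so validity becomes a side condition of the lemmas. *)
Definition mulwn u m v n : W := \sum_(s <- shuffle u (shiftw v m)) mkB (s, (m + n)%N).

Definition Deltawn w n : W2 := sum_splits w (fun p q => tens (mkB (p, n)) (mkB (q, n))).

Lemma nablaW_linear : linear (@nablaW k). Proof. exact: linext_is_linear. Qed.

Lemma DeltaW_linear : linear (@DeltaW k). Proof. exact: linext_is_linear. Qed.

Lemma epsWE (x : W) :
  epsW x = linext (V := k^o) (fun b => (bword b == [::])%:R) x.
Proof. by apply: eq_bigr => b _; case: eqP. Qed.

Lemma epsW_linear : linear (@epsW k : W -> k^o).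
Proof. by move=> c x y; rewrite !epsWE linext_is_linear. Qed.

Lemma nablaUU a b : nablaW (tens (<< a >> : W) (<< b >> : W)) = mulB k a b.
Proof. by rewrite tensUU /nablaW linextU1. Qed.

Lemma DeltaU b : DeltaW (<< b >> : W) = Deltawn (bword b) (bnum b).
Proof. by rewrite /DeltaW linextU1. Qed.

Lemma epsU b : epsW (<< b >> : W) = (bword b == [::])%:R.
Proof. by rewrite epsWE linextU1. Qed.

Lemma nabla_mkB u m v n : validWn (u, m) -> validWn (v, n) ->
  nablaW (tens (mkB (u, m)) (mkB (v, n))) = mulwn u m v n.
Proof. by move=> Hu Hv; rewrite (mkB_valid Hu) (mkB_valid Hv) nablaUU. Qed.

Lemma Delta_mkB w n : validWn (w, n) -> DeltaW (mkB (w, n)) = Deltawn w n.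
Proof. by move=> Hw; rewrite (mkB_valid Hw) DeltaU. Qed.

Lemma eps_mkB w n : validWn (w, n) -> epsW (mkB (w, n)) = (w == [::])%:R.
Proof. by move=> Hw; rewrite (mkB_valid Hw) epsU. Qed.

Lemma epsWD (x y : W) : epsW (x + y) = epsW x + epsW y.
Proof. exact: (linear_funD epsW_linear). Qed.

Lemma epsWZ c (x : W) : epsW (c *: x) = c * epsW x.
Proof. exact: (linear_funZ epsW_linear). Qed.

Lemma epsL_tens (x y : W) : epsL (tens x y) = epsW x *: y.
Proof.
move: x y; apply: bilinear_eqU => [y|x|y|x|a b].
- exact: linear_comp (linext_is_linear _) (tens_linearl _).
- exact: linear_comp (linext_is_linear _) (tens_linearr _).
- by move=> c x z; rewrite epsWD epsWZ scalerDl scalerA.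
- by move=> c y z; rewrite scalerDr !scalerA mulrC.
- by rewrite tensUU /epsL linextU1.
Qed.

Lemma epsR_tens (x y : W) : epsR (tens x y) = epsW y *: x.
Proof.
move: x y; apply: bilinear_eqU => [y|x|y|x|a b].
- exact: linear_comp (linext_is_linear _) (tens_linearl _).
- exact: linear_comp (linext_is_linear _) (tens_linearr _).
- by move=> c x z; rewrite scalerDr !scalerA mulrC.
- by move=> c y z; rewrite epsWD epsWZ scalerDl scalerA.
- by rewrite tensUU /epsR linextU1.
Qed.

Lemma mul2E (X Y : W2) : mul2 X Y =
  linext (fun p => linext (fun q => tens (mulB k p.1 q.1) (mulB k p.2 q.2)) Y) X.
Proof.
apply: eq_bigr => p _; rewrite /linext scaler_sumr; apply: eq_bigr => q _.
by rewrite scalerA.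
Qed.

Lemma mul2_linearl (Y : W2) : linear (fun X => mul2 X Y).
Proof. by move=> c X Z; rewrite !mul2E linext_is_linear. Qed.

Lemma mul2_linearr (X : W2) : linear (mul2 X).
Proof.
move=> c Y Z; rewrite !mul2E.
exact: (@linear_linext_fun _ _ _ _ X
  (fun p => linext (fun q => tens (mulB k p.1 q.1) (mulB k p.2 q.2)))
  (fun p => linext_is_linear _) c Y Z).
Qed.

Lemma mul2_tens (x1 x2 y1 y2 : W) :
  mul2 (tens x1 x2) (tens y1 y2) = tens (nablaW (tens x1 y1)) (nablaW (tens x2 y2)).
Proof.
move: x1 y1; apply: bilinear_eqU => [y|x|y|x|a c].
- exact: linear_comp (mul2_linearl (tens y y2)) (tens_linearl x2).
- exact: linear_comp (mul2_linearr (tens x x2)) (tens_linearl y2).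
- exact: linear_comp (tens_linearl (nablaW (tens x2 y2)))
    (linear_comp nablaW_linear (tens_linearl y)).
- exact: linear_comp (tens_linearl (nablaW (tens x2 y2)))
    (linear_comp nablaW_linear (tens_linearr x)).
move: x2 y2; apply: bilinear_eqU => [y|x|y|x|b d].
- exact: linear_comp (mul2_linearl (tens << c >> y)) (tens_linearr << a >>).
- exact: linear_comp (mul2_linearr (tens << a >> x)) (tens_linearr << c >>).
- exact: linear_comp (tens_linearr (nablaW (tens << a >> << c >>)))
    (linear_comp nablaW_linear (tens_linearl y)).
- exact: linear_comp (tens_linearr (nablaW (tens << a >> << c >>)))
    (linear_comp nablaW_linear (tens_linearr x)).
- rewrite !tensUU mul2E !linextU1 /=.
  by congr tens; rewrite -nablaUU tensUU.
Qed.

Lemma nablaW_suml (I : Type) (r : seq I) (F : I -> W) (y : W) :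
  nablaW (tens (\sum_(i <- r) F i) y) = \sum_(i <- r) nablaW (tens (F i) y).
Proof. exact: (linear_fun_sum (linear_comp nablaW_linear (tens_linearl y))). Qed.

Lemma nablaW_sumr (I : Type) (r : seq I) (F : I -> W) (x : W) :
  nablaW (tens x (\sum_(i <- r) F i)) = \sum_(i <- r) nablaW (tens x (F i)).
Proof. exact: (linear_fun_sum (linear_comp nablaW_linear (tens_linearr x))). Qed.

Lemma mulwn_assoc u m v n w p :
  validWn (u, m) -> validWn (v, n) -> validWn (w, p) ->
  nablaW (tens (mulwn u m v n) (mkB (w, p))) = nablaW (tens (mkB (u, m)) (mulwn v n w p)).
Proof.
move=> Hu Hv Hw; rewrite /mulwn [LHS]nablaW_suml [RHS]nablaW_sumr.
rewrite (eq_big_seq (fun s => mulwn s (m + n)%N w p)) => [|s Hs]; last first.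
  by rewrite nabla_mkB // (validWn_shuffle Hu Hv Hs).
rewrite [RHS](eq_big_seq (fun s => mulwn u m s (n + p)%N)) => [|s Hs]; last first.
  by rewrite nabla_mkB // (validWn_shuffle Hv Hw Hs).
rewrite /mulwn big_shuffle_assoc -shiftw_shiftw /shiftw shuffle_map big_map.
by apply: eq_bigr => s _; apply: eq_bigr => t _; rewrite addnA.
Qed.

Lemma mulB_assoc a b (c : Wbasis) :
  nablaW (tens (mulB k a b) << c >>) = nablaW (tens << a >> (mulB k b c)).
Proof.
rewrite -!mkB_val; case: a b c => [[u m] Hu] [[v n] Hv] [[w p] Hw].
exact: mulwn_assoc.
Qed.

Lemma mulwn_nill w n : mulwn [::] 0 w n = mkB (w, n).
Proof. by rewrite /mulwn shuffle0s big_seq1 shiftw0. Qed.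

Lemma mulwn_nilr w n : mulwn w n [::] 0 = mkB (w, n).
Proof. by rewrite /mulwn shuffles0 big_seq1 addn0. Qed.

Lemma iotaW1 : iotaW (1 : k) = mkB ([::], 0%N).
Proof. by rewrite /iotaW scale1r. Qed.

Lemma mul2_sum_splitsl w G (Y : W2) :
  mul2 (sum_splits w G) Y = sum_splits w (fun p q => mul2 (G p q) Y).
Proof. exact: (linear_sum_splits _ _ (mul2_linearl Y)). Qed.

Lemma mul2_sum_splitsr w G (X : W2) :
  mul2 X (sum_splits w G) = sum_splits w (fun p q => mul2 X (G p q)).
Proof. exact: (linear_sum_splits _ _ (mul2_linearr X)). Qed.

Lemma mul2_mkB u1 u2 m v1 v2 n :
  validWn (u1, m) -> validWn (u2, m) -> validWn (v1, n) -> validWn (v2, n) ->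
  mul2 (tens (mkB (u1, m)) (mkB (u2, m))) (tens (mkB (v1, n)) (mkB (v2, n))) =
  tens (mulwn u1 m v1 n) (mulwn u2 m v2 n).
Proof. by move=> *; rewrite mul2_tens; congr tens; apply: nabla_mkB. Qed.

Lemma Delta_mulwn u m v n : validWn (u, m) -> validWn (v, n) ->
  DeltaW (mulwn u m v n) = mul2 (Deltawn u m) (Deltawn v n).
Proof.
move=> Hu Hv; rewrite [LHS](linear_fun_sum DeltaW_linear).
rewrite (eq_big_seq (fun s => Deltawn s (m + n)%N)) => [|s Hs]; last first.
  by rewrite Delta_mkB // (validWn_shuffle Hu Hv Hs).
rewrite big_shuffle_splits /sum_split_shuffles /Deltawn mul2_sum_splitsl.
apply: eq_sum_splits_in => i _; rewrite mul2_sum_splitsr /shiftw sum_splits_map.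
apply: eq_sum_splits_in => j _.
rewrite mul2_mkB ?validWn_take ?validWn_drop // [RHS]tens_suml.
by apply: eq_bigr => s _; rewrite tens_sumr.
Qed.

Lemma eps_mulwn u m v n : validWn (u, m) -> validWn (v, n) ->
  epsW (mulwn u m v n) = (u == [::])%:R * (v == [::])%:R.
Proof.
move=> Hu Hv; rewrite /mulwn (linear_fun_sum epsW_linear).
rewrite (eq_big_seq (fun s => ((s == [::])%:R : k))) => [|s Hs]; last first.
  by rewrite eps_mkB // (validWn_shuffle Hu Hv Hs).
case: u Hu => [|a u] Hu; first by rewrite shuffle0s big_seq1 mul1r; case: v Hv.
by rewrite mul0r big1_seq // => s /andP[_ /perm_shuffle /perm_size]; case: s.
Qed.

Lemma epsL_Deltawn w n : validWn (w, n) -> epsL (Deltawn w n) = mkB (w, n).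
Proof.
move=> Hw; rewrite /Deltawn linear_sum_splits; last exact: linext_is_linear.
rewrite -[RHS](sum_splits_nill (fun q => mkB (q, n))).
apply: eq_sum_splits_in => i _; rewrite epsL_tens eps_mkB ?validWn_take //.
by case: (take i w) => [|? ?]; rewrite ?scale1r ?scale0r.
Qed.

Lemma epsR_Deltawn w n : validWn (w, n) -> epsR (Deltawn w n) = mkB (w, n).
Proof.
move=> Hw; rewrite /Deltawn linear_sum_splits; last exact: linext_is_linear.
rewrite -[RHS](sum_splits_nilr (fun p => mkB (p, n))).
apply: eq_sum_splits_in => i _; rewrite epsR_tens eps_mkB ?validWn_drop //.
by case: (drop i w) => [|? ?]; rewrite ?scale1r ?scale0r.
Qed.

Lemma Deltawn_coassoc w n : validWn (w, n) ->
  mapT (@DeltaW k) id (Deltawn w n) = reassoc (mapT id (@DeltaW k) (Deltawn w n)).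
Proof.
move=> Hw; rewrite /Deltawn !linear_sum_splits; try exact: linext_is_linear.
transitivity (sum_splits w (fun p r => sum_splits p (fun p1 p2 =>
   tens (tens (mkB (p1, n)) (mkB (p2, n))) (mkB (r, n))))).
  apply: eq_sum_splits_in => i _.
  rewrite mapT_tens ?Delta_mkB ?validWn_take //; last exact: DeltaW_linear.
  by rewrite /Deltawn tens_sum_splitsl.
rewrite sum_splits_assoc; apply: eq_sum_splits_in => i _.
rewrite mapT_tens ?Delta_mkB ?validWn_drop //; last exact: DeltaW_linear.
rewrite /Deltawn tens_sum_splitsr linear_sum_splits; last exact: linext_is_linear.
by apply: eq_sum_splits => p q; rewrite reassoc_tens.
Qed.

Lemma msupp_on_mulB a b : msupp_on (fun c =>
  bdeg c = (bdeg a + bdeg b)%N /\ bnum c = (bnum a + bnum b)%N) (mulB k a b).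
Proof.
apply: msupp_on_sum => s /perm_shuffle Hs c /msupp_on_mkB Hc.
by rewrite /bdeg /bword /bnum Hc /= (perm_size Hs) size_cat size_map.
Qed.

Lemma msupp_on_nabla (P Q R : Wbasis -> Prop) (x y : W) :
  msupp_on P x -> msupp_on Q y -> (forall a b, P a -> Q b -> msupp_on R (mulB k a b)) ->
  msupp_on R (nablaW (tens x y)).
Proof.
move=> Px Qy PQR; apply: msupp_on_linext => -[a b] /msupp_tens[/Px Pa /Qy Qb].
exact: PQR.
Qed.

Lemma W_structure_maps_linear : structure_maps_linear k.
Proof.
by split; [exact: nablaW_linear | split; [exact: DeltaW_linear | exact: epsW_linear]].
Qed.

Lemma W_is_algebra : is_algebra k.
Proof.
split=> [T|x].
  move: T; apply: linear_eqU => [||[[a b] c]].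
  - exact: linear_comp nablaW_linear (linext_is_linear _).
  - exact: linear_comp nablaW_linear (linear_comp (linext_is_linear _) (linext_is_linear _)).
  transitivity (nablaW (tens (mulB k a b) << c >>)).
    by rewrite /mapT linextU1 /= -nablaUU tensUU.
  by rewrite [LHS]mulB_assoc linextU1 /mapT linextU1 /= -nablaUU tensUU.
split.
- move: x; apply: linear_eqU => [||b].
  + exact: linear_comp nablaW_linear (tens_linearr _).
  + exact: linear_idfun.
  by case: b => [[w n] Hw]; rewrite iotaW1 -mkB_val nabla_mkB // mulwn_nill.
- move: x; apply: linear_eqU => [||b].
  + exact: linear_comp nablaW_linear (tens_linearl _).
  + exact: linear_idfun.
  by case: b => [[w n] Hw]; rewrite iotaW1 -mkB_val nabla_mkB // mulwn_nilr.
Qed.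

Lemma W_is_coalgebra : is_coalgebra k.
Proof.
split=> [|x]; last split.
- apply: linear_eqU => [||b].
  + exact: linear_comp (linext_is_linear _) DeltaW_linear.
  + exact: linear_comp (linext_is_linear _) (linear_comp (linext_is_linear _) DeltaW_linear).
  by rewrite DeltaU; case: b => [[w n] Hw]; exact: Deltawn_coassoc.
- move: x; apply: linear_eqU => [||b].
  + exact: linear_comp (linext_is_linear _) DeltaW_linear.
  + exact: linear_idfun.
  by rewrite DeltaU -mkB_val; case: b => [[w n] Hw]; exact: epsL_Deltawn.
- move: x; apply: linear_eqU => [||b].
  + exact: linear_comp (linext_is_linear _) DeltaW_linear.
  + exact: linear_idfun.
  by rewrite DeltaU -mkB_val; case: b => [[w n] Hw]; exact: epsR_Deltawn.
Qed.

Lemma W_bialgebra_compat : bialgebra_compat k.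
Proof.
split; last split; last split.
- apply: bilinear_eqU => [y|x|y|x|a b].
  + exact: linear_comp DeltaW_linear (linear_comp nablaW_linear (tens_linearl y)).
  + exact: linear_comp DeltaW_linear (linear_comp nablaW_linear (tens_linearr x)).
  + exact: linear_comp (mul2_linearl _) DeltaW_linear.
  + exact: linear_comp (mul2_linearr _) DeltaW_linear.
  rewrite nablaUU !DeltaU.
  by case: a b => [[u m] Hu] [[v n] Hv]; exact: Delta_mulwn.
- by rewrite iotaW1 Delta_mkB // /Deltawn sum_splits_nil.
- apply: (@bilinear_eqU _ _ _ k^o) => [y|x|y|x|a b].
  + exact: linear_comp epsW_linear (linear_comp nablaW_linear (tens_linearl y)).
  + exact: linear_comp epsW_linear (linear_comp nablaW_linear (tens_linearr x)).
  + by move=> c x1 x2; rewrite epsWD epsWZ mulrDl -mulrA.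
  + by move=> c y1 y2; rewrite epsWD epsWZ mulrDr mulrCA.
  rewrite nablaUU !epsU.
  by case: a b => [[u m] Hu] [[v n] Hv]; exact: eps_mulwn.
- by rewrite iotaW1 eps_mkB.
Qed.

Lemma W_graded_maps : graded_maps k.
Proof.
split; last split; last split.
- move=> i j x y Hx Hy; apply: (msupp_on_nabla Hx Hy) => a b Ha Hb.
  by move=> c /msupp_on_mulB[-> _]; rewrite Ha Hb.
- by rewrite iotaW1 => b /msupp_on_mkB; rewrite /bdeg /bword => ->.
- move=> d x Hx; apply: msupp_on_linext => b /Hx <-.
  apply: msupp_on_sum => i _ -[b1 b2] /msupp_tens[/msupp_on_mkB Hb1 /msupp_on_mkB Hb2].
  by rewrite /bdeg /bword Hb1 Hb2 /= -size_cat cat_take_drop.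
- move=> d x d_gt0 Hx; rewrite /epsW big1_seq // => b /andP[_ /Hx Hb].
  by rewrite -size_eq0 -/(bdeg b) Hb (negbTE (lt0n_neq0 d_gt0)) mulr0.
Qed.

Lemma W_not_hopf : ~ is_hopf k.
Proof.
case=> S HS; pose g := mkB ([::], 1%N).
have [Sg _] := HS g.
move: Sg; rewrite /conv Delta_mkB // /Deltawn sum_splits_nil.
rewrite mapT_tens; [|exact: linearP|exact: linear_idfun].
rewrite eps_mkB //= iotaW1 => Sg.
(* right multiplication by g raises the second index *)
have Hpos : msupp_on (fun c => 0 < bnum c)%N (nablaW (tens (S g) g)).
  apply: (msupp_on_nabla (P := fun _ => True)) => [//||a b _ Hb c].
    exact: msupp_on_mkB.
  by case/msupp_on_mulB => _ ->; rewrite /bnum Hb addn1.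
pose b0 : Wbasis := exist _ ([::], 0%N) isT.
have := congr1 (mcoeff b0) Sg.
by rewrite mcoeff_mkB eqxx (mcoeff_msupp_on Hpos) //; move/eqP; rewrite eq_sym oner_eq0.
Qed.

End WBialgebra.

Theorem theorem3p5 (k : fieldType) : is_graded_bialgebra k /\ ~ is_hopf k.
Proof.
split; last exact: W_not_hopf.
split; first exact: W_structure_maps_linear.
split; first exact: W_is_algebra.
split; first exact: W_is_coalgebra.
split; first exact: W_bialgebra_compat.
exact: W_graded_maps.
Qed.
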